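(* Let $\tilde{\mathbf{G}}$ be a degree $2$ cover of $\mathbf{G}=\mathbf{GSp}_{2r}$ (split) with first Brylinski–Deligne invariant $Q_{0,1}$. Then the dual group $\tilde G^\vee$ is isomorphic to $GSp_{2r}$ if $r$ is odd, and to $PGSp_{2r}\times\mathbb{G}_m$ if $r$ is even.
   Context: For $\mathbf{GSp}_{2r}$ with a standard split maximal torus and Borel subgroup, let $e_0,\dots,e_r$ be a basis of the cocharacter lattice $Y$ and $f_0,\dots,f_r$ the dual basis of the character lattice $X$; simple roots are $\alpha_i=f_i-f_{i+1}$ ($1\le i\le r-1$), $\alpha_r=2f_r-f_0$, simple coroots $\alpha_i^\vee=e_i-e_{i+1}$ ($1\le i\le r-1$), $\alpha_r^\vee=e_r$. The Weyl group is $S_r\ltimes\mu_2^r$, with $S_r$ permuting indices $1,\dots,r$ (fixing $e_0$) and involutions $w_j$ with $w_j(e_j)=-e_j$, $w_j(e_i)=e_i$ for $i\ne j,0$, $w_j(e_0)=e_0+e_j$. For integers $\kappa,\nu$, $Q_{\kappa,\nu}$ is the unique Weyl-invariant quadratic form with $Q(e_0)=\kappa$ and $Q(e_i)=\nu$ for $1\le i\le r$. Dual group of a degree $n$ cover with first invariant $Q$: set $\beta_Q(y_1,y_2)=n^{-1}(Q(y_1+y_2)-Q(y_1)-Q(y_2))$, $Y_{Q,n}=\{y\in Y:\beta_Q(y,Y)\subset\mathbb{Z}\}$, $X_{Q,n}=\{x\in n^{-1}X:\langle x,Y_{Q,n}\rangle\subset\mathbb{Z}\}$; for each root $\phi$ put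 $n_\phi=n/\gcd(n,Q(\phi^\vee))$, $\tilde\phi=n_\phi^{-1}\phi$, $\tilde\phi^\vee=n_\phi\phi^\vee$. The dual group is the split reductive group whose root datum has character lattice $Y_{Q,n}$, roots $\{\tilde\phi^\vee\}$, cocharacter lattice $X_{Q,n}$, coroots $\{\tilde\phi\}$. *)

From HB Require Import structures.
From mathcomp Require Import all_boot all_order all_algebra all_fingroup.
Set Implicit Arguments. Unset Strict Implicit. Unset Printing Implicit Defensive.
Import Order.TTheory GRing.Theory Num.Theory.
Local Open Scope ring_scope.

(* Vectors in Q^d (row vectors).  For GSp_{2r} we use d = r+1, with index
   ord0 for e_0 / f_0 and index (lift ord0 i), i : 'I_r, for e_{i+1} / f_{i+1}. *)
Notation vec d := 'rV[rat]_d.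

Definition dot d (x y : vec d) : rat := \sum_(k < d) x 0 k * y 0 k.

Definition isZ d (v : vec d) : Prop := forall k, v 0 k \is a Num.int.

Definition ev d (k : 'I_d) : vec d := delta_mx 0 k.
Definition e0 r : vec r.+1 := ev ord0.
Definition ei r (i : 'I_r) : vec r.+1 := ev (lift ord0 i).

(* A root datum in coordinates: (X, Y, R) where X, Y are predicates on Q^d
   (the character and cocharacter lattices, paired by [dot]) and R is a list
   of pairs (root, corresponding coroot); the root set is {a | (a,_) \in R}.
   Isomorphism of root data: a linear iso M of Q^d (extending a group iso of
   the full-rank lattices) mapping X onto X', whose contragredient
   y |-> y (M^{-1})^T maps Y onto Y', and which maps the roots/coroots pairs
   of R bijectively onto those of R'. *)
Definition rdIso d (X Y : vec d -> Prop) (R : seq (vec d * vec d))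
    (X' Y' : vec d -> Prop) (R' : seq (vec d * vec d)) : Prop :=
  exists M : 'M[rat]_d,
    [/\ M \in unitmx,
        forall x, X x <-> X' (x *m M),
        forall y, Y y <-> Y' (y *m (invmx M)^T) &
        forall a b, (a, b) \in R <-> (a *m M, b *m (invmx M)^T) \in R'].

(* All (root, coroot) pairs of GSp_{2r} (f-coordinates, e-coordinates):
   f_i - f_j  / e_i - e_j            (i <> j),
   +-(f_i + f_j - f_0) / +-(e_i + e_j) (i <> j),
   +-(2 f_i - f_0) / +- e_i.
   (These are the Weyl-orbits of the simple roots alpha_i = f_i - f_{i+1},
    alpha_r = 2 f_r - f_0, with coroots e_i - e_{i+1}, e_r.) *)
Definition GSpRoots r : seq (vec r.+1 * vec r.+1) :=
  flatten [seq [seq (ei i - ei j, ei i - ei j) | j <- enum 'I_r & j != i]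
               ++ [seq (ei i + ei j - e0 r, ei i + ei j) | j <- enum 'I_r & j != i]
               ++ [seq (- (ei i + ei j - e0 r), - (ei i + ei j))
                      | j <- enum 'I_r & j != i]
          | i <- enum 'I_r]
  ++ [seq (2%:R *: ei i - e0 r, ei i) | i <- enum 'I_r]
  ++ [seq (- (2%:R *: ei i - e0 r), - ei i) | i <- enum 'I_r].

Definition GSp_X r : vec r.+1 -> Prop := @isZ r.+1.
Definition GSp_Y r : vec r.+1 -> Prop := @isZ r.+1.

(* Weyl group action on Y (generators):
   sigma in S_r permutes e_1..e_r and fixes e_0;
   w_j : e_j |-> -e_j, e_i |-> e_i (i <> j, 0), e_0 |-> e_0 + e_j. *)
Definition permact r (s : 'S_r) (y : vec r.+1) : vec r.+1 :=
  \row_k (match unlift ord0 k with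
          | Some i => y 0 (lift ord0 ((s^-1)%g i))
          | None => y 0 ord0 end).
Definition wact r (j : 'I_r) (y : vec r.+1) : vec r.+1 :=
  y + (y 0 ord0 - 2%:R * y 0 (lift ord0 j)) *: ei j.

Definition isQuadForm d (Q : vec d -> rat) : Prop :=
  (exists B : 'M[rat]_d, forall y, Q y = (y *m B *m y^T) 0 0) /\
  (forall y, isZ y -> Q y \is a Num.int).
Definition WeylInvariant r (Q : vec r.+1 -> rat) : Prop :=
  (forall (s : 'S_r) y, Q (permact s y) = Q y) /\
  (forall (j : 'I_r) y, Q (wact j y) = Q y).

Definition betaQ d (n : nat) (Q : vec d -> rat) (y1 y2 : vec d) : rat :=
  (Q (y1 + y2) - Q y1 - Q y2) / n%:R.
Definition YQn d (n : nat) (Q : vec d -> rat) (y : vec d) : Prop :=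
  isZ y /\ forall y2, isZ y2 -> betaQ n Q y y2 \is a Num.int.
Definition XQn d (n : nat) (Q : vec d -> rat) (x : vec d) : Prop :=
  isZ (n%:R *: x) /\ forall y, YQn n Q y -> dot x y \is a Num.int.
Definition nphi d (n : nat) (Q : vec d -> rat) (cor : vec d) : nat :=
  (n %/ gcdn n `|numq (Q cor)|)%N.
(* dual root datum: character lattice Y_{Q,n}, roots n_phi phi^vee,
   cocharacter lattice X_{Q,n}, coroots n_phi^{-1} phi *)
Definition dualRoots r (n : nat) (Q : vec r.+1 -> rat) : seq (vec r.+1 * vec r.+1) :=
  [seq ((nphi n Q p.2)%:R *: p.2, ((nphi n Q p.2)%:R)^-1 *: p.1) | p <- GSpRoots r].

(* PGSp_{2r} is the adjoint group of type C_r: in coordinates eps_1..eps_r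
   (indices lift ord0 i) its character lattice is the root lattice
   {x in Z^r | sum x_i even}, cocharacter lattice the coweight lattice
   Z^r + Z(1/2,...,1/2); roots +-eps_i +- eps_j (coroot the same),
   +-2 eps_i (coroot +-eps_i).  The factor G_m is index ord0 (X = Y = Z,
   no roots). *)
Definition PGSpGm_X r (x : vec r.+1) : Prop :=
  isZ x /\ ~~ odd `|numq (\sum_(i < r) x 0 (lift ord0 i))|%N.
Definition PGSpGm_Y r (y : vec r.+1) : Prop :=
  y 0 ord0 \is a Num.int /\
  ((forall i : 'I_r, y 0 (lift ord0 i) \is a Num.int) \/
   (forall i : 'I_r, y 0 (lift ord0 i) - 2%:R^-1 \is a Num.int)).
Definition PGSpGm_Roots r : seq (vec r.+1 * vec r.+1) :=
  flatten [seq [seq (ei i - ei j, ei i - ei j) | j <- enum 'I_r & j != i]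
               ++ [seq (ei i + ei j, ei i + ei j) | j <- enum 'I_r & j != i]
               ++ [seq (- (ei i + ei j), - (ei i + ei j)) | j <- enum 'I_r & j != i]
          | i <- enum 'I_r]
  ++ [seq (2%:R *: ei i, ei i) | i <- enum 'I_r]
  ++ [seq (- (2%:R *: ei i), - ei i) | i <- enum 'I_r].

(* Weyl invariance pins down the polar form of Q: with Q(e_0) = 0 and
   Q(e_i) = 1 one finds beta_{Q,2}(u, v) = sum_{i>0} u_i v_i
   - (u_0 sum_{i>0} v_i + v_0 sum_{i>0} u_i) / 2, so Y_{Q,2} consists of the
   integral y with y_0 and y_1 + ... + y_r even.  Every coroot has Q = 2 except
   +-e_i, where Q = 1, so the dual roots are the coroots of GSp_{2r} with the
   +-e_i doubled.  An explicit rational change of coordinates, depending on the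
   parity of r, maps Y_{Q,2} onto the character lattice of GSp_{2r} (r odd) or
   PGSp_{2r} x G_m (r even) and the dual roots onto the roots; its
   contragredient then carries the dual lattice X_{Q,2} and the dual coroots to
   the cocharacter lattice and the coroots. *)

From HB Require Import structures.
From mathcomp Require Import all_boot all_order all_algebra all_fingroup.
From mathcomp Require Import ring lra.
Set Implicit Arguments. Unset Strict Implicit. Unset Printing Implicit Defensive.
Import Order.TTheory GRing.Theory Num.Theory.
Local Open Scope ring_scope.

Section Pairing.
Variable d : nat.
Implicit Types (x y z : vec d) (a b : 'I_d).

Lemma dotE x y : dot x y = (x *m y^T) 0 0.
Proof. by rewrite /dot mxE; apply: eq_bigr => k _; rewrite mxE. Qed.

Lemma dotC x y : dot x y = dot y x.
Proof. by rewrite /dot; apply: eq_bigr => k _; rewrite mulrC. Qed.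

Lemma dotDl x y z : dot (x + y) z = dot x z + dot y z.
Proof. by rewrite /dot -big_split; apply: eq_bigr => k _; rewrite mxE mulrDl. Qed.

Lemma dotNl x z : dot (- x) z = - dot x z.
Proof. by rewrite /dot -sumrN; apply: eq_bigr => k _; rewrite mxE mulNr. Qed.

Lemma dotZl c x z : dot (c *: x) z = c * dot x z.
Proof. by rewrite /dot mulr_sumr; apply: eq_bigr => k _; rewrite mxE mulrA. Qed.

Lemma dotDr x y z : dot x (y + z) = dot x y + dot x z.
Proof. by rewrite dotC dotDl !(dotC x). Qed.

Lemma dotNr x z : dot x (- z) = - dot x z.
Proof. by rewrite dotC dotNl dotC. Qed.

Lemma dotZr c x z : dot x (c *: z) = c * dot x z.
Proof. by rewrite dotC dotZl dotC. Qed.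

Lemma evE a b : ev a 0 b = (a == b)%:R.
Proof. by rewrite /ev mxE eqxx /= eq_sym. Qed.

Lemma dot_evl a y : dot (ev a) y = y 0 a.
Proof.
rewrite /dot (bigD1 a) //= big1 => [|k /negbTE ka]; first by rewrite evE eqxx mul1r addr0.
by rewrite evE eq_sym ka mul0r.
Qed.

Lemma dot_evr a y : dot y (ev a) = y 0 a.
Proof. by rewrite dotC dot_evl. Qed.

Lemma mulmx_tr_row y (u v : vec d) : y *m (u^T *m v) = dot y u *: v.
Proof. by rewrite mulmxA [y *m u^T]mx11_scalar -dotE mul_scalar_mx. Qed.

Lemma mx1_of_row_id (A : 'M[rat]_d) : (forall y, y *m A = y) -> A = 1%:M.
Proof. by move=> Aid; apply/row_matrixP => i; rewrite !rowE Aid mulmx1. Qed.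

Lemma isZ_ev a : isZ (ev a).
Proof. by move=> k; rewrite evE; case: (a == k); rewrite ?rpred0 ?rpred1. Qed.

Lemma isZD x y : isZ x -> isZ y -> isZ (x + y).
Proof. by move=> Zx Zy k; rewrite mxE rpredD. Qed.

Lemma isZN x : isZ x -> isZ (- x).
Proof. by move=> Zx k; rewrite mxE rpredN. Qed.

Lemma isZZ c x : c \is a Num.int -> isZ x -> isZ (c *: x).
Proof. by move=> Zc Zx k; rewrite mxE rpredM. Qed.

Lemma isZ_dual x : isZ x <-> forall y, isZ y -> dot x y \is a Num.int.
Proof.
split=> [Zx y Zy|Zdot k]; first by apply: rpred_sum => k _; rewrite rpredM.
by rewrite -dot_evr; apply/Zdot/isZ_ev.
Qed.

End Pairing.

Definition bil d (B : 'M[rat]_d) (u v : vec d) : rat := (u *m B *m v^T) 0 0.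

Section Bilinear.
Variables (d : nat) (B : 'M[rat]_d).
Implicit Types (u v w : vec d).

Lemma bilDl u v w : bil B (u + v) w = bil B u w + bil B v w.
Proof. by rewrite /bil !mulmxDl mxE. Qed.

Lemma bilDr u v w : bil B w (u + v) = bil B w u + bil B w v.
Proof. by rewrite /bil linearD /= mulmxDr mxE. Qed.

Lemma bilZl c u v : bil B (c *: u) v = c * bil B u v.
Proof. by rewrite /bil -!scalemxAl mxE. Qed.

Lemma bilZr c u v : bil B u (c *: v) = c * bil B u v.
Proof. by rewrite /bil linearZ /= -scalemxAr mxE. Qed.

Lemma bil_sum u v : bil B u v = \sum_a \sum_b u 0 a * v 0 b * B a b.
Proof.
rewrite /bil mxE; under eq_bigr => b _ do rewrite !mxE mulr_suml.
rewrite exchange_big; apply: eq_bigr => a _; apply: eq_bigr => b _.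
by rewrite mulrAC.
Qed.

Lemma bil_ev a b : bil B (ev a) (ev b) = B a b.
Proof.
rewrite bil_sum (bigD1 a) //= [X in _ + X]big1 => [|k /negbTE ka]; last first.
  by rewrite big1 // => l _; rewrite evE eq_sym ka !mul0r.
rewrite addr0 (bigD1 b) //= [X in _ + X]big1 => [|l /negbTE lb]; last first.
  by rewrite !evE eq_sym lb mulr0 mul0r.
by rewrite addr0 !evE !eqxx !mul1r.
Qed.

End Bilinear.

Lemma rdIso_of_mx d (X Y : vec d -> Prop) R (X' Y' : vec d -> Prop) R'
    (M N : 'M[rat]_d) :
  M *m N^T = 1%:M ->
  (forall x, X x <-> X' (x *m M)) ->
  (forall y, Y y <-> Y' (y *m N)) ->
  R' = [seq (p.1 *m M, p.2 *m N) | p <- R] ->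
  rdIso X Y R X' Y' R'.
Proof.
move=> MN hX hY ->; have [uM uN] := mulmx1_unit MN.
have invM : (invmx M)^T = N.
  by rewrite -[N]trmxK; congr _^T; rewrite -[RHS]mul1mx -(mulVmx uM) -mulmxA MN mulmx1.
exists M; rewrite invM; split=> // a b.
have uNT : N \in unitmx by rewrite -unitmx_tr.
have inj : injective (fun p : vec d * vec d => (p.1 *m M, p.2 *m N)).
  move=> [p1 p2] [q1 q2] /= [/(can_inj (mulmxK uM)) -> /(can_inj (mulmxK uNT)) ->].
  by [].
by have := mem_map inj R (a, b); rewrite /= => ->.
Qed.

(* The condition [isZ (2 *: x)] is redundant once every [2 *: ev k] lies in [P]. *)
Lemma dual_lattice_transfer d (P P' T' : vec d -> Prop) (M N : 'M[rat]_d) x :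
  M *m N^T = 1%:M ->
  (forall y, P y <-> P' (y *m M)) ->
  (forall w, T' w <-> forall z, P' z -> dot w z \is a Num.int) ->
  (forall k, P (2%:R *: ev k)) ->
  (isZ (2%:R *: x) /\ (forall y, P y -> dot x y \is a Num.int)) <-> T' (x *m N).
Proof.
move=> MN hP hT P2.
have NTM : N^T *m M = 1%:M by apply: mulmx1C.
have dotMN y : dot (x *m N) (y *m M) = dot x y.
  have NMT : N *m M^T = 1%:M by rewrite -[N]trmxK -trmx_mul MN trmx1.
  by rewrite !dotE trmx_mul !mulmxA -(mulmxA x N) NMT mulmx1.
have PM z : P' z -> P (z *m N^T) by rewrite hP -mulmxA NTM mulmx1.
rewrite hT; split=> [[_ Px] z /PM /Px|Tx].
  by rewrite -dotMN -mulmxA NTM mulmx1.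
split=> [k|y Py]; last by rewrite -dotMN; apply/Tx/hP.
by rewrite mxE -[x 0 k]dot_evr -dotZr -dotMN; apply/Tx/hP.
Qed.

Lemma int_even_numq (q : rat) : q \is a Num.int ->
  (~~ odd `|numq q|%N) = (q / 2%:R \is a Num.int).
Proof.
case/intrP=> z ->; rewrite numq_int -dvdn2 -(dvdzE 2 z).
apply/idP/idP => [/dvdzP[w ->]|/intrP[w hw]].
  by rewrite rmorphM /= mulfK ?pnatr_eq0 ?rpred_int.
apply/dvdzP; exists w; apply: (@intr_inj rat).
by rewrite rmorphM /= -hw; field.
Qed.

Lemma int_or_half_int (w : rat) : 2%:R * w \is a Num.int ->
  w \is a Num.int \/ w - 2%:R^-1 \is a Num.int.
Proof.
case/intrP=> n hn; have hw : w = n%:~R / 2%:R by rewrite -hn; field.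
have m2 := divz_eq n 2.
have : (n %% 2 == 0)%Z || (n %% 2 == 1)%Z.
  move: (@modz_ge0 n 2 isT) (@ltz_pmod n 2 isT).
  by case: (n %% 2)%Z => [[|[|k]]|k].
case/orP=> /eqP hm; [left|right].
  by rewrite hw m2 hm addr0 rmorphM /= mulfK ?rpred_int ?pnatr_eq0.
have -> : w - 2%:R^-1 = (n %/ 2)%Z%:~R by rewrite hw {1}m2 hm rmorphD rmorphM /=; field.
exact: rpred_int.
Qed.

Definition tailsum r (y : vec r.+1) : rat := \sum_(i < r) y 0 (lift ord0 i).

Section Coordinates.
Variable r : nat.
Implicit Types (x y u v : vec r.+1) (i j : 'I_r).

Lemma lift0_eq i j : (lift ord0 i == lift ord0 j :> 'I_r.+1) = (i == j).
Proof. exact: (inj_eq (@lift_inj _ ord0)). Qed.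

Lemma lift0_neq0 i : (lift ord0 i == ord0 :> 'I_r.+1) = false.
Proof. by apply/negbTE; rewrite eq_sym neq_lift. Qed.

Lemma e0E k : e0 r 0 k = (k == ord0)%:R.
Proof. by rewrite evE eq_sym. Qed.

Lemma eiE i k : ei i 0 k = (k == lift ord0 i)%:R.
Proof. by rewrite evE eq_sym. Qed.

Lemma dot_split x y :
  dot x y = x 0 ord0 * y 0 ord0 + \sum_i x 0 (lift ord0 i) * y 0 (lift ord0 i).
Proof. by rewrite /dot big_ord_recl. Qed.

Lemma tailsumD u v : tailsum (u + v) = tailsum u + tailsum v.
Proof. by rewrite /tailsum -big_split; apply: eq_bigr => i _; rewrite mxE. Qed.

Lemma tailsumN u : tailsum (- u) = - tailsum u.
Proof. by rewrite /tailsum -sumrN; apply: eq_bigr => i _; rewrite mxE. Qed.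

Lemma tailsumZ c u : tailsum (c *: u) = c * tailsum u.
Proof. by rewrite /tailsum mulr_sumr; apply: eq_bigr => i _; rewrite mxE. Qed.

Lemma tailsum_e0 : tailsum (e0 r) = 0.
Proof. by rewrite /tailsum big1 // => i _; rewrite e0E lift0_neq0. Qed.

Lemma tailsum_ei i : tailsum (ei i) = 1.
Proof.
rewrite /tailsum (bigD1 i) //= big1 ?addr0 => [|j /negbTE ji]; first by rewrite eiE eqxx.
by rewrite eiE lift0_eq ji.
Qed.

Lemma isZ_tailsum y : isZ y -> tailsum y \is a Num.int.
Proof. by move=> Zy; apply: rpred_sum. Qed.

Lemma dot_ei y i : dot y (ei i) = y 0 (lift ord0 i).
Proof. exact: dot_evr. Qed.

Lemma dot_e0 y : dot y (e0 r) = y 0 ord0.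
Proof. exact: dot_evr. Qed.

End Coordinates.

Definition Y2lattice r (y : vec r.+1) : Prop :=
  [/\ isZ y, y 0 ord0 / 2%:R \is a Num.int & tailsum y / 2%:R \is a Num.int].

Section QuadraticForm.
Variables (r : nat) (Q : vec r.+1 -> rat) (B : 'M[rat]_r.+1).
Hypothesis QB : forall y, Q y = bil B y y.
Hypothesis Qw : forall j y, Q (wact j y) = Q y.
Hypothesis Qe0 : Q (e0 r) = 0.
Hypothesis Qei : forall i, Q (ei i) = 1.
Implicit Types (u v y : vec r.+1) (i j : 'I_r).

Lemma QD u v : Q (u + v) = Q u + Q v + (bil B u v + bil B v u).
Proof. by rewrite !QB !bilDl !bilDr; ring. Qed.

Lemma QZ c u : Q (c *: u) = c ^+ 2 * Q u.
Proof. by rewrite !QB bilZl bilZr expr2 mulrA. Qed.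

Lemma QN u : Q (- u) = Q u.
Proof. by rewrite -scaleN1r QZ sqrrN expr1n mul1r. Qed.

Lemma polar_ev a b : B a b + B b a = Q (ev a + ev b) - Q (ev a) - Q (ev b).
Proof. by rewrite QD !bil_ev; ring. Qed.

Lemma polar00 : B ord0 ord0 + B ord0 ord0 = 0.
Proof. by rewrite polar_ev -mulr2n -scaler_nat QZ -/(e0 r) Qe0 !mulr0 !subr0. Qed.

Lemma polarii i : B (lift ord0 i) (lift ord0 i) + B (lift ord0 i) (lift ord0 i) = 2%:R.
Proof. by rewrite polar_ev -mulr2n -scaler_nat QZ -/(ei i) Qei; ring. Qed.

Lemma polar0i i : B ord0 (lift ord0 i) + B (lift ord0 i) ord0 = -1.
Proof.
have shift : wact i (e0 r) = ev ord0 + ev (lift ord0 i).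
  by rewrite /wact !evE eqxx (negbTE (neq_lift _ _)) mulr0 subr0 scale1r.
by rewrite polar_ev -shift Qw -/(e0 r) -/(ei i) Qe0 Qei; ring.
Qed.

Lemma polarij i j : i != j ->
  B (lift ord0 i) (lift ord0 j) + B (lift ord0 j) (lift ord0 i) = 0.
Proof.
move=> ij; have := Qw i (ei i + ei j).
have -> : wact i (ei i + ei j) = ei j + (-1) *: ei i.
  apply/rowP => k; rewrite /wact !mxE /= eqxx lift0_eq (negbTE ij) /=.
  ring.
rewrite !QD QZ !Qei !bilZl !bilZr -!/(ei _) => Qswap.
have := polar_ev (lift ord0 i) (lift ord0 j); rewrite QD !Qei -!bil_ev.
lra.
Qed.

Lemma betaQ2E u v : betaQ 2 Q u v = dot u v - u 0 ord0 * v 0 ord0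
  - (u 0 ord0 * tailsum v + v 0 ord0 * tailsum u) / 2%:R.
Proof.
have -> : betaQ 2 Q u v = (bil B u v + bil B v u) / 2%:R.
  by rewrite /betaQ QD; congr (_ / _); ring.
have -> : bil B u v + bil B v u = \sum_a \sum_b u 0 a * v 0 b * (B a b + B b a).
  rewrite !bil_sum [X in _ + X]exchange_big -big_split; apply: eq_bigr => a _.
  by rewrite -big_split; apply: eq_bigr => b _ /=; ring.
rewrite big_ord_recl big_ord_recl polar00 mulr0 add0r.
have -> : \sum_j u 0 ord0 * v 0 (lift ord0 j) *
    (B ord0 (lift ord0 j) + B (lift ord0 j) ord0) = - (u 0 ord0 * tailsum v).
  by rewrite /tailsum mulr_sumr -sumrN; apply: eq_bigr => j _; rewrite polar0i; ring.
have -> : \sum_i \sum_b u 0 (lift ord0 i) * v 0 b *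
    (B (lift ord0 i) b + B b (lift ord0 i)) =
  \sum_i (2%:R * (u 0 (lift ord0 i) * v 0 (lift ord0 i)) - v 0 ord0 * u 0 (lift ord0 i)).
  apply: eq_bigr => i _; rewrite big_ord_recl addrC (bigD1 i) //= big1 => [|j ji].
    by rewrite addr0 polarii [B (lift ord0 i) ord0 + _]addrC polar0i; ring.
  by rewrite polarij 1?eq_sym // mulr0.
by rewrite sumrB -!mulr_sumr dot_split /tailsum; field.
Qed.

Lemma YQn2E : (0 < r)%N -> forall y, YQn 2 Q y <-> Y2lattice y.
Proof.
move=> r_gt0 y; split=> [[Zy Zbeta]|[Zy y0_half ty_half]].
  set i0 := Ordinal r_gt0.
  have beta_e0 : betaQ 2 Q y (e0 r) = - (tailsum y / 2%:R).
    by rewrite betaQ2E dot_e0 tailsum_e0 e0E eqxx /=; field.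
  have beta_ei : betaQ 2 Q y (ei i0) = y 0 (lift ord0 i0) - y 0 ord0 / 2%:R.
    by rewrite betaQ2E dot_ei tailsum_ei eiE (negbTE (neq_lift _ _)) /=; field.
  have ty_half : tailsum y / 2%:R \is a Num.int.
    by rewrite -rpredN -beta_e0 Zbeta //; apply: isZ_ev.
  split=> //; have -> : y 0 ord0 / 2%:R = y 0 (lift ord0 i0) - betaQ 2 Q y (ei i0).
    by rewrite beta_ei; ring.
  by rewrite rpredB // Zbeta //; apply: isZ_ev.
split=> // z Zz; rewrite betaQ2E.
have -> : (y 0 ord0 * tailsum z + z 0 ord0 * tailsum y) / 2%:R =
  y 0 ord0 / 2%:R * tailsum z + z 0 ord0 * (tailsum y / 2%:R) by field.
apply: rpredB; last by rewrite rpredD // rpredM ?isZ_tailsum ?Zz.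
by rewrite rpredB ?rpredM ?Zy ?Zz //; exact: (proj1 (isZ_dual y)).
Qed.

Lemma nphi_eq1 y : Q y = 2%:R -> nphi 2 Q y = 1%N.
Proof. by rewrite /nphi => ->. Qed.

Lemma nphi_eq2 y : Q y = 1 -> nphi 2 Q y = 2%N.
Proof. by rewrite /nphi => ->. Qed.

Lemma Q_sum_ei i j : i != j -> Q (ei i + ei j) = 2%:R.
Proof. by move=> ij; rewrite QD !Qei !bil_ev polarij //; ring. Qed.

Lemma Q_diff_ei i j : i != j -> Q (ei i - ei j) = 2%:R.
Proof.
move=> ij; rewrite QD QN !Qei -scaleN1r bilZl bilZr !bil_ev.
by rewrite -mulrDr polarij //; ring.
Qed.

End QuadraticForm.

Definition rootsC r (z : vec r.+1) : seq (vec r.+1 * vec r.+1) :=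
  flatten [seq [seq (ei i - ei j, ei i - ei j) | j <- enum 'I_r & j != i]
               ++ [seq (ei i + ei j - z, ei i + ei j) | j <- enum 'I_r & j != i]
               ++ [seq (- (ei i + ei j - z), - (ei i + ei j))
                      | j <- enum 'I_r & j != i]
          | i <- enum 'I_r]
  ++ [seq (2%:R *: ei i - z, ei i) | i <- enum 'I_r]
  ++ [seq (- (2%:R *: ei i - z), - ei i) | i <- enum 'I_r].

Lemma GSpRoots_rootsC r : GSpRoots r = rootsC (e0 r).
Proof. by []. Qed.

Lemma PGSpGm_Roots_rootsC r : PGSpGm_Roots r = rootsC 0.
Proof.
rewrite /rootsC; congr (flatten _ ++ _ ++ _); apply: eq_map => i; rewrite ?subr0 //.
by congr (_ ++ _ ++ _); apply: eq_map => j; rewrite subr0.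
Qed.

Section DualRoots.
Variables (r : nat) (Q : vec r.+1 -> rat) (B : 'M[rat]_r.+1).
Hypothesis QB : forall y, Q y = bil B y y.
Hypothesis Qw : forall j y, Q (wact j y) = Q y.
Hypothesis Qei : forall i, Q (ei i) = 1.

Variables (M N : 'M[rat]_r.+1) (z c : vec r.+1).
Hypothesis eiM : forall i, ei i *m M = ei i - 2%:R^-1 *: z.
Hypothesis eiN : forall i, ei i *m N = ei i + c.
Hypothesis e0N : e0 r *m N = 2%:R *: c.

Local Ltac row_eq :=
  rewrite -?scalemxAl ?(mulNmx, mulmxDl, mulmxBl) -?scalemxAl !(eiM, eiN, e0N);
  apply/rowP => k; rewrite !mxE; field.

Lemma rootsC_dualRoots2 : rootsC z = [seq (p.1 *m M, p.2 *m N) | p <- dualRoots 2 Q].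
Proof.
have nphi_ei i : nphi 2 Q (ei i) = 2%N by apply: nphi_eq2.
have nphi_Nei i : nphi 2 Q (- ei i) = 2%N by apply: nphi_eq2; rewrite (QN QB).
have nphi_sum i j : j != i -> nphi 2 Q (ei i + ei j) = 1%N.
  by move=> ji; apply/nphi_eq1/(Q_sum_ei QB Qw Qei); rewrite eq_sym.
have nphi_Nsum i j : j != i -> nphi 2 Q (- (ei i + ei j)) = 1%N.
  by move=> ji; apply: nphi_eq1; rewrite (QN QB) (Q_sum_ei QB Qw Qei) // eq_sym.
have nphi_diff i j : j != i -> nphi 2 Q (ei i - ei j) = 1%N.
  by move=> ji; apply/nphi_eq1/(Q_diff_ei QB Qw Qei); rewrite eq_sym.
rewrite /dualRoots -map_comp GSpRoots_rootsC /rootsC !map_cat map_flatten -!map_comp.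
congr (flatten _ ++ _ ++ _).
- apply: eq_map => i /=; rewrite !map_cat -!map_comp.
  congr (_ ++ _ ++ _); apply/eq_in_map => j; rewrite mem_filter => /andP[ji _] /=.
  + by rewrite nphi_diff //; congr pair; row_eq.
  + by rewrite nphi_sum //; congr pair; row_eq.
  + by rewrite nphi_Nsum //; congr pair; row_eq.
- by apply: eq_map => i /=; rewrite nphi_ei; congr pair; row_eq.
- by apply: eq_map => i /=; rewrite nphi_Nei; congr pair; row_eq.
Qed.

End DualRoots.

Section TargetLattices.
Variable r : nat.
Implicit Types (w z : vec r.+1).

Lemma Y2lattice_2ev k : Y2lattice (2%:R *: ev k : vec r.+1).
Proof.
split; first by apply: isZZ; [apply: rpred_nat|apply: isZ_ev].
  by rewrite mxE mulrC mulKf ?pnatr_eq0 //; apply: isZ_ev.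
by rewrite tailsumZ mulrC mulKf ?pnatr_eq0 // isZ_tailsum //; apply: isZ_ev.
Qed.

Lemma PGSpGm_XE z : PGSpGm_X z <-> isZ z /\ tailsum z / 2%:R \is a Num.int.
Proof.
by rewrite /PGSpGm_X; split=> -[Zz hz]; rewrite int_even_numq ?isZ_tailsum in hz *.
Qed.

Lemma PGSpGm_Y_dual : (0 < r)%N ->
  forall w, PGSpGm_Y w <-> forall z, PGSpGm_X z -> dot w z \is a Num.int.
Proof.
move=> r_gt0 w; split=> [[w0 wi] z /PGSpGm_XE[Zz tz_half]|Zdot].
  rewrite dot_split rpredD ?rpredM //; case: wi => wi.
    by apply: rpred_sum => i _; rewrite rpredM.
  have -> : \sum_i w 0 (lift ord0 i) * z 0 (lift ord0 i) =
      \sum_i (w 0 (lift ord0 i) - 2%:R^-1) * z 0 (lift ord0 i) + tailsum z / 2%:R.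
    by rewrite /tailsum mulr_suml -big_split; apply: eq_bigr => i _ /=; field.
  by rewrite rpredD // rpred_sum // => i _; rewrite rpredM.
have X_e0 : PGSpGm_X (e0 r).
  by apply PGSpGm_XE; rewrite tailsum_e0 mul0r; split; [apply: isZ_ev|apply: rpred0].
have X_diff (i j : 'I_r) : PGSpGm_X (ei i - ei j).
  apply PGSpGm_XE; rewrite tailsumD tailsumN !tailsum_ei subrr mul0r.
  by split; [apply: isZD; [|apply: isZN]; apply: isZ_ev|apply: rpred0].
have X_2ei (i : 'I_r) : PGSpGm_X (2%:R *: ei i).
  apply PGSpGm_XE; rewrite tailsumZ tailsum_ei mulr1 divff ?pnatr_eq0 //.
  by split; [apply: isZZ; [apply: rpred_nat|apply: isZ_ev]|apply: rpred1].
split; first by rewrite -(dot_e0 w) Zdot.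
set i0 := Ordinal r_gt0.
have wi_wj j : w 0 (lift ord0 i0) - w 0 (lift ord0 j) \is a Num.int.
  by rewrite -!dot_ei -dotNr -dotDr Zdot.
have := Zdot _ (X_2ei i0); rewrite dotZr dot_ei.
case/int_or_half_int=> wi; [left|right] => j.
  by rewrite -[w 0 _](subKr (w 0 (lift ord0 i0))) rpredB ?wi_wj.
by rewrite -(subKr (w 0 (lift ord0 i0)) (w 0 (lift ord0 j))) addrAC rpredB ?wi_wj.
Qed.

End TargetLattices.

Definition ones r : vec r.+1 := const_mx 1.

(* [Meven] and [Modd] carry Y_{Q,2} = {y in Z^{r+1} | y_0 and y_1 + ... + y_r
   even} onto the character lattice of the target group; [Neven] and [Nodd]
   are their contragredients. *)
Definition Meven r : 'M[rat]_r.+1 := 1%:M - 2%:R^-1 *: ((e0 r)^T *m ones r).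
Definition Neven r : 'M[rat]_r.+1 := 1%:M + (ones r)^T *m e0 r.
Definition Modd r : 'M[rat]_r.+1 := 1%:M - 2%:R^-1 *: ((e0 r)^T *m ones r)
  + (r.+1%:R / 4%:R) *: ((e0 r)^T *m e0 r) - 2%:R^-1 *: ((ones r)^T *m e0 r).
Definition Nodd r : 'M[rat]_r.+1 :=
  1%:M + (e0 r)^T *m ones r + (ones r)^T *m (ones r + e0 r).

Section Matrices.
Variable r : nat.
Implicit Types (x y : vec r.+1) (i : 'I_r).

Lemma dot_ones y : dot y (ones r) = y 0 ord0 + tailsum y.
Proof.
rewrite dot_split /tailsum mxE mulr1; congr (_ + _).
by apply: eq_bigr => i _; rewrite mxE mulr1.
Qed.

Lemma dot_ones_ones : dot (ones r) (ones r) = r.+1%:R.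
Proof.
by rewrite /dot; under eq_bigr do rewrite mxE mulr1; rewrite sumr_const card_ord.
Qed.

Lemma MevenE y : y *m Meven r = y - (y 0 ord0 / 2%:R) *: ones r.
Proof. by rewrite mulmxBr mulmx1 -scalemxAr mulmx_tr_row dot_e0 scalerA mulrC. Qed.

Lemma NevenE x : x *m Neven r = x + dot x (ones r) *: e0 r.
Proof. by rewrite mulmxDr mulmx1 mulmx_tr_row. Qed.

Lemma NevenTE x : x *m (Neven r)^T = x + x 0 ord0 *: ones r.
Proof. by rewrite linearD /= trmx1 trmx_mul trmxK mulmxDr mulmx1 mulmx_tr_row dot_e0. Qed.

Lemma ModdE y : y *m Modd r = y - (y 0 ord0 / 2%:R) *: ones r
  + (y 0 ord0 * r.+1%:R / 4%:R) *: e0 r - (dot y (ones r) / 2%:R) *: e0 r.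
Proof.
rewrite /Modd !mulmxDr !mulmxN mulmx1 -!scalemxAr !mulmx_tr_row !dot_e0 !scalerA.
by congr (_ - _ + _ - _); congr (_ *: _); rewrite mulrC // mulrA.
Qed.

Lemma NoddE x : x *m Nodd r = x + x 0 ord0 *: ones r + dot x (ones r) *: (ones r + e0 r).
Proof. by rewrite !mulmxDr mulmx1 !mulmx_tr_row dot_e0 scalerDr addrA. Qed.

Lemma NoddTE x :
  x *m (Nodd r)^T = x + dot x (ones r) *: e0 r + dot x (ones r + e0 r) *: ones r.
Proof.
rewrite /Nodd !linearD /= trmx1 !trmx_mul !trmxK ?mulmx1 !mulmx_tr_row.
by rewrite dotDr scalerDl !addrA.
Qed.

Lemma Meven_Neven : Meven r *m (Neven r)^T = 1%:M.
Proof.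
apply: mx1_of_row_id => y; rewrite mulmxA MevenE NevenTE.
by apply/rowP => k; rewrite !mxE; field.
Qed.

Lemma Modd_Nodd : Modd r *m (Nodd r)^T = 1%:M.
Proof.
apply: mx1_of_row_id => y; rewrite mulmxA ModdE NoddTE.
rewrite !(dotDl, dotDr, dotNl, dotZl) dot_ones_ones !dot_e0 [dot (e0 r) _]dotC dot_e0.
by apply/rowP => k; rewrite !mxE /=; field.
Qed.

Local Ltac row_ring := apply/rowP => k; rewrite !mxE /=; ring.

Lemma ei_Meven i : ei i *m Meven r = ei i - 2%:R^-1 *: 0.
Proof. by rewrite MevenE eiE (negbTE (neq_lift _ _)); row_ring. Qed.

Lemma ei_Neven i : ei i *m Neven r = ei i + e0 r.
Proof. by rewrite NevenE dot_ones tailsum_ei eiE (negbTE (neq_lift _ _)); row_ring. Qed.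

Lemma e0_Neven : e0 r *m Neven r = 2%:R *: e0 r.
Proof. by rewrite NevenE dot_ones tailsum_e0 e0E eqxx; row_ring. Qed.

Lemma ei_Modd i : ei i *m Modd r = ei i - 2%:R^-1 *: e0 r.
Proof. by rewrite ModdE dot_ones tailsum_ei eiE (negbTE (neq_lift _ _)); row_ring. Qed.

Lemma ei_Nodd i : ei i *m Nodd r = ei i + (ones r + e0 r).
Proof. by rewrite NoddE dot_ones tailsum_ei eiE (negbTE (neq_lift _ _)); row_ring. Qed.

Lemma e0_Nodd : e0 r *m Nodd r = 2%:R *: (ones r + e0 r).
Proof. by rewrite NoddE dot_ones tailsum_e0 e0E eqxx; row_ring. Qed.

Lemma Meven_entry y k : (y *m Meven r) 0 k = y 0 k - y 0 ord0 / 2%:R.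
Proof. by rewrite MevenE !mxE mulr1. Qed.

Lemma tailsum_Meven y : tailsum (y *m Meven r) = tailsum y - r%:R * (y 0 ord0 / 2%:R).
Proof.
rewrite /tailsum; under eq_bigr do rewrite Meven_entry.
by rewrite sumrB sumr_const card_ord mulr_natl.
Qed.

Lemma Modd_entry0 y : (y *m Modd r) 0 ord0 = y 0 ord0 * r.+1%:R / 4%:R - tailsum y / 2%:R.
Proof. by rewrite ModdE dot_ones !mxE /= mulr1; field. Qed.

Lemma Modd_entry y i : (y *m Modd r) 0 (lift ord0 i) = y 0 (lift ord0 i) - y 0 ord0 / 2%:R.
Proof. by rewrite ModdE !mxE /= mulr1; field. Qed.

Lemma tailsum_Modd y : tailsum (y *m Modd r) = tailsum y - r%:R * (y 0 ord0 / 2%:R).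
Proof.
rewrite /tailsum; under eq_bigr do rewrite Modd_entry.
by rewrite sumrB sumr_const card_ord mulr_natl.
Qed.

End Matrices.

Section Parity.
Variable r : nat.
Implicit Types (y : vec r.+1).

Lemma Y2lattice_even : ~~ odd r -> forall y, Y2lattice y <-> PGSpGm_X (y *m Meven r).
Proof.
move=> r_even y; have r_half : r%:R = 2%:R * (r./2)%:R :> rat.
  by rewrite -natrM mul2n -[in LHS](odd_double_half r) (negbTE r_even) add0n.
have y0_half : y 0 ord0 / 2%:R = (y *m Meven r) 0 ord0 by rewrite Meven_entry; field.
have tailsum_half : tailsum y / 2%:R =
    tailsum (y *m Meven r) / 2%:R + (r./2)%:R * (y 0 ord0 / 2%:R).
  by rewrite tailsum_Meven r_half; field.
rewrite /Y2lattice PGSpGm_XE tailsum_half y0_half.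
split=> [[Zy Zy0 Zt]|[ZMy Zt]].
  split=> [k|]; first by rewrite Meven_entry y0_half rpredB.
  by rewrite -(addrK ((r./2)%:R * (y *m Meven r) 0 ord0) (_ / _)) rpredB ?rpredM ?rpred_nat.
have Zy0 := ZMy ord0.
split=> [k|//|]; last by rewrite rpredD // rpredM ?rpred_nat.
by rewrite -[y 0 k](subrK (y 0 ord0 / 2%:R)) -Meven_entry y0_half rpredD.
Qed.

Lemma Y2lattice_odd : odd r -> forall y, Y2lattice y <-> isZ (y *m Modd r).
Proof.
move=> r_odd y; have r_half : r%:R = 1 + 2%:R * (r./2)%:R :> rat.
  by rewrite -natrM mul2n -[in LHS](odd_double_half r) r_odd natrD.
have r1_half : r.+1%:R = 1 + r%:R :> rat by rewrite -addn1 natrD addrC.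
have entry0 : (y *m Modd r) 0 ord0 =
    y 0 ord0 / 2%:R * ((r./2)%:R + 1) - tailsum y / 2%:R.
  by rewrite Modd_entry0 r1_half r_half; field.
split=> [[Zy Zy0 Zt] k|ZMy].
  case: (unliftP ord0 k) => [i ->|->]; first by rewrite Modd_entry rpredB.
  by rewrite entry0 rpredB // rpredM // rpredD ?rpred_nat.
have Zy0 : y 0 ord0 / 2%:R \is a Num.int.
  have -> : y 0 ord0 / 2%:R = 2%:R * (y *m Modd r) 0 ord0 + tailsum (y *m Modd r).
    by rewrite tailsum_Modd Modd_entry0 r1_half; field.
  by rewrite rpredD ?rpredM ?rpred_nat ?isZ_tailsum.
split=> //; last first.
  have -> : tailsum y / 2%:R = y 0 ord0 / 2%:R * ((r./2)%:R + 1) - (y *m Modd r) 0 ord0.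
    by rewrite entry0; ring.
  by rewrite rpredB // rpredM // rpredD ?rpred_nat.
move=> k; case: (unliftP ord0 k) => [i ->|->].
  by rewrite -(subrK (y 0 ord0 / 2%:R) (y 0 _)) -Modd_entry rpredD.
have -> : y 0 ord0 = 2%:R * (y 0 ord0 / 2%:R) by field.
by rewrite rpredM ?rpred_nat.
Qed.

End Parity.

Theorem mainTheorem6 (r : nat) (Q : 'rV[rat]_r.+1 -> rat) :
  (0 < r)%N ->
  isQuadForm Q -> WeylInvariant Q ->
  Q (e0 r) = 0 -> (forall i : 'I_r, Q (ei i) = 1) ->
  (odd r ->
     rdIso (YQn 2 Q) (XQn 2 Q) (dualRoots 2 Q)
           (@GSp_X r) (@GSp_Y r) (GSpRoots r)) /\
  (~~ odd r ->
     rdIso (YQn 2 Q) (XQn 2 Q) (dualRoots 2 Q)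
           (@PGSpGm_X r) (@PGSpGm_Y r) (PGSpGm_Roots r)).
Proof.
move=> r_gt0 [[B QB] _] [_ Qw] Qe0 Qei.
have YE := YQn2E QB Qw Qe0 Qei r_gt0.
have Y_2ev k : YQn 2 Q (2%:R *: ev k) by apply/YE/Y2lattice_2ev.
split=> r_parity.
- have YM y : YQn 2 Q y <-> isZ (y *m Modd r) by rewrite YE; apply: Y2lattice_odd.
  apply: (rdIso_of_mx (Modd_Nodd r) YM).
  + by move=> x; apply: dual_lattice_transfer (Modd_Nodd r) YM (@isZ_dual _) Y_2ev.
  + rewrite GSpRoots_rootsC.
    by rewrite (rootsC_dualRoots2 QB Qw Qei (@ei_Modd r) (@ei_Nodd r) (e0_Nodd r)).
- have YM y : YQn 2 Q y <-> PGSpGm_X (y *m Meven r) by rewrite YE; apply: Y2lattice_even.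
  apply: (rdIso_of_mx (Meven_Neven r) YM).
  + move=> x; apply: dual_lattice_transfer (Meven_Neven r) YM _ Y_2ev.
    exact: PGSpGm_Y_dual.
  + rewrite PGSpGm_Roots_rootsC.
    by rewrite (rootsC_dualRoots2 QB Qw Qei (@ei_Meven r) (@ei_Neven r) (e0_Neven r)).
Qed.
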